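(* Let $\mathcal{X}$ be a Suslin space, $f_1,\dots,f_n\colon\mathcal{X}\to\mathbb{R}$ measurable, $c_1,\dots,c_n\in\mathbb{R}$, and $H:=\{\nu\in\mathcal{M}(\mathcal{X}):f_i\text{ is }\nu\text{-integrable and }\mathbb{E}_\nu[f_i]\le c_i,\ i=1,\dots,n\}$. Let $f\colon\mathcal{X}\to\mathbb{R}$ be semibounded and universally measurable. Then $F(\nu):=\mathbb{E}_{\widehat{\nu}}[f]$, $\nu\in H$, is measure affine on $H$.
   Context: $\widehat{\nu}$ is the completion of $\nu$; universally measurable means measurable w.r.t. the intersection of all completions of the Borel $\sigma$-algebra. $\Sigma(\operatorname{ext}H)$ is the smallest $\sigma$-algebra on the set of extreme points $\operatorname{ext}H$ making all evaluations $\nu\mapsto\nu(A)$, $A$ Borel, measurable. $F$ is measure affine on $H$ if, for every $\nu\in H$ and every probability measure $p$ on $\Sigma(\operatorname{ext}H)$ with $\nu(A)=\int_{\operatorname{ext}H}\nu'(A)\,dp(\nu')$ for all Borel $A$, $F$ is $p$-integrable and $F(\nu)=\int_{\operatorname{ext}H}F(\nu')\,dp(\nu')$. *)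

From HB Require Import structures.
From mathcomp Require Import all_boot all_order all_algebra.
From mathcomp Require Import all_classical all_reals all_analysis measurable_realfun.
Set Implicit Arguments. Unset Strict Implicit. Unset Printing Implicit Defensive.
Import Order.TTheory GRing.Theory Num.Theory.
Import numFieldNormedType.Exports.
Local Open Scope classical_set_scope.
Local Open Scope ring_scope.

Definition polish (R : realType) (P : completePseudoMetricType R) : Prop :=
  hausdorff_space P /\ exists D : set P, countable D /\ dense D.

Definition suslin (R : realType) (X : ptopologicalType) : Prop :=
  hausdorff_space X /\
  exists (P : completePseudoMetricType R) (g : P -> X),
    polish P /\ continuous g /\ (forall x : X, exists y : P, g y = x).

Definition borel (X : ptopologicalType) := g_sigma_algebraType (@open X).

Definition universally_measurable (R : realType) (X : ptopologicalType)
    (A : set (borel X)) : Prop :=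
  forall nu : probability (borel X) R,
    exists B C : set (borel X), [/\ measurable B, measurable C,
      B `<=` A, A `<=` C & nu (C `\` B) = 0%E].

Definition universally_measurable_fun (R : realType) (X : ptopologicalType)
    (f : borel X -> R) : Prop :=
  forall B : set R, measurable B -> universally_measurable R (f @^-1` B).

Definition semibounded (T : Type) (R : realType) (f : T -> R) : Prop :=
  (exists b : R, forall x, f x <= b) \/ (exists b : R, forall x, b <= f x).

Notation completion mu := (@completed_measure_extension _ _ _ mu).

Definition Hset (R : realType) (X : ptopologicalType) (n : nat)
    (fs : 'I_n -> borel X -> R) (c : 'I_n -> R) : set (probability (borel X) R) :=
  [set nu | forall i : 'I_n,
     nu.-integrable setT (fun x => (fs i x)%:E) /\
     (\int[nu]_x (fs i x)%:E <= (c i)%:E)%E].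

Definition ext (R : realType) (d : measure_display) (T : measurableType d)
    (H : set (probability T R)) : set (probability T R) :=
  [set nu | H nu /\
     forall (nu1 nu2 : probability T R) (t : R),
       H nu1 -> H nu2 -> 0 < t < 1 ->
       (forall A, measurable A -> nu A = (t%:E * nu1 A + (1 - t)%:E * nu2 A)%E) ->
       (forall A, measurable A -> nu1 A = nu A /\ nu2 A = nu A)].

(* The carrier ext H, as a type, pointed by a given element e0
   (pointedness is required by the library to build a measurable type). *)
Definition extT (R : realType) (d : measure_display) (T : measurableType d)
  (H : set (probability T R)) (e0 : {nu | ext H nu}) := {nu | ext H nu}.

Section extT_pointed.
Context (R : realType) (d : measure_display) (T : measurableType d)
  (H : set (probability T R)) (e0 : {nu | ext H nu}).
HB.instance Definition _ := gen_eqMixin (extT e0).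
HB.instance Definition _ := gen_choiceMixin (extT e0).
HB.instance Definition _ := isPointed.Build (extT e0) e0.
End extT_pointed.

Definition eval_system (R : realType) (d : measure_display) (T : measurableType d)
    (H : set (probability T R)) (e0 : {nu | ext H nu}) :
    set (set (extT e0)) :=
  \bigcup_(A in @measurable _ T)
     preimage_set_system setT (fun e : extT e0 => (sval e) A)
       (measurable : set (set (\bar R))).

Definition extH_space (R : realType) (d : measure_display) (T : measurableType d)
    (H : set (probability T R)) (e0 : {nu | ext H nu}) :=
  g_sigma_algebraType (@eval_system R d T H e0).

Definition p_integrable d (S : measurableType d) (R : realType)
    (p : probability S R) (F : S -> \bar R) : Prop :=
  @measurable_fun _ _ (caratheodory_type (p^*)%mu) (\bar R) setT F /\
  ((\int[completion p]_x (F^\+ x) < +oo)%E \/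
   (\int[completion p]_x (F^\- x) < +oo)%E).

Definition measure_affine (R : realType) (d : measure_display) (T : measurableType d)
    (H : set (probability T R)) (F : probability T R -> \bar R) : Prop :=
  forall nu : probability T R, H nu ->
  forall (e0 : {nu | ext H nu}) (p : probability (extH_space e0) R),
    (forall A, measurable A ->
       nu A = (\int[p]_e (sval e) A)%E) ->
    p_integrable p (fun e : extH_space e0 => F (sval e)) /\
    F nu = (\int[completion p]_e F (sval e))%E.

From HB Require Import structures.
From mathcomp Require Import all_boot all_order all_algebra.
From mathcomp Require Import all_classical all_reals all_analysis measurable_realfun.
Import Order.TTheory GRing.Theory Num.Theory.
Local Open Scope classical_set_scope.
Local Open Scope ring_scope.
Set Implicit Arguments. Unset Strict Implicit. Unset Printing Implicit Defensive.

(* The value F(nu) agrees with the integral of a Borel modification g of f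
   which differs from f only on a nu-null set N. Since nu is the barycenter
   of p, p-almost every extreme point e also charges N with zero mass, so
   F(e) is the integral of g against e, a measurable function of e. For Borel
   g the barycentric formula follows from the one for indicators by monotone
   approximation, applied separately to the positive and negative parts of g;
   semiboundedness makes one of the two parts bounded, so no indeterminate
   difference oo - oo arises. *)

Lemma fin_num_le_cst (R : realType) (x : \bar R) (c : R) :
  (0 <= x)%E -> (x <= c%:E)%E -> x \is a fin_num.
Proof. by move=> x0 xc; rewrite ge0_fin_numE // (le_lt_trans xc) ?ltry. Qed.

Section ereal_subB.
Local Open Scope ereal_scope.
Context (T : Type) (R : realType) (u v : T -> \bar R) (x : T).
Hypotheses (u0 : 0 <= u x) (v0 : 0 <= v x).

Lemma funepos_subB_le : (fun x => u x - v x)^\+ x <= u x.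
Proof. by rewrite funeposE ge_max u0 andbT -[leRHS]sube0 leeB. Qed.

Lemma funeneg_subB_le : v x \is a fin_num -> (fun x => u x - v x)^\- x <= v x.
Proof.
move=> vfin; rewrite funenegE ge_max v0 andbT fin_num_oppeB //.
by rewrite -[leRHS]add0e leeD2r // oppe_le0.
Qed.

End ereal_subB.

Lemma bounded_funepos_or_funeneg (T : Type) (R : realType) (g : T -> R) (b : R) :
  (forall x, g x <= b) \/ (forall x, b <= g x) ->
  (forall x, (EFin \o g)^\+ x <= `|b|%:E)%E \/
  (forall x, (EFin \o g)^\- x <= `|b|%:E)%E.
Proof.
case=> gb; [left|right] => x.
  by rewrite funeposE ge_max !lee_fin normr_ge0 andbT (le_trans (gb x)) ?ler_norm.
rewrite funenegE ge_max /= !lee_fin normr_ge0 andbT lerNl.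
by apply: le_trans (gb x); rewrite lerNl -normrN ler_norm.
Qed.

Section completion.
Local Open Scope ereal_scope.
Context d (T : measurableType d) (R : realType) (mu : {measure set T -> \bar R}).
Let I := caratheodory_type (mu^*)%mu.

Lemma measurable_completion (A : set T) : measurable A -> measurable (A : set I).
Proof. exact: caratheodory_measurable_mu_ext. Qed.

Lemma measurable_fun_completion (h : T -> \bar R) :
  measurable_fun [set: T] h -> measurable_fun [set: I] (h : I -> \bar R).
Proof.
move=> mh _ B mB; rewrite setTI; apply: measurable_completion.
by rewrite -[X in measurable X]setTI; exact: mh.
Qed.

Lemma completion_null (N : set T) : measurable N -> mu N = 0 ->
  completion mu N = 0.
Proof. by move=> mN <-; exact: measurable_mu_extE. Qed.

Lemma integral_completion (h : T -> \bar R) : measurable_fun [set: T] h ->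
  \int[completion mu]_x h x = \int[mu]_x h x.
Proof.
have mid : measurable_fun [set: I] (fun x : I => x : T).
  by move=> _ B mB; rewrite setTI; exact: measurable_completion.
have ge0_int g : measurable_fun [set: T] g -> (forall x, 0 <= g x) ->
    \int[completion mu]_x g x = \int[mu]_x g x.
  move=> mg g0.
  transitivity (\int[pushforward (completion mu) (fun x : I => x : T)]_x g x).
    by rewrite ge0_integral_pushforward.
  apply: eq_measure_integral => // A mA _.
  exact: measurable_mu_extE.
move=> mh; rewrite [LHS]integralE [RHS]integralE.
by rewrite !ge0_int //; [exact: measurable_funeneg|exact: measurable_funepos].
Qed.

Section ae.
Variables (h1 h2 : T -> \bar R) (N : set T).
Hypotheses (mh1 : measurable_fun [set: T] h1) (mN : measurable N) (N0 : mu N = 0).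
Hypothesis h21 : forall x, ~ N x -> h2 x = h1 x.

Lemma measurable_fun_completion_ae : measurable_fun [set: I] (h2 : I -> \bar R).
Proof.
move=> _ B mB; rewrite setTI.
have -> : h2 @^-1` B = (h1 @^-1` B `\` N) `|` (h2 @^-1` B `&` N).
  apply/seteqP; split => x /=.
    by have [Nx|Nx] := pselect (N x); [right|left; rewrite -h21].
  by move=> [[? Nx]|[]//]; rewrite h21.
apply: measurableU.
  apply: measurableD; apply: measurable_completion => //.
  by rewrite -[X in measurable X]setTI; exact: mh1.
apply: measure_is_complete_caratheodory; exists N; split.
- exact: measurable_completion.
- exact: completion_null.
- exact: subIsetr.
Qed.

Lemma integral_completion_ae :
  \int[completion mu]_x h2 x = \int[mu]_x h1 x.
Proof.
rewrite -(integral_completion mh1); apply: ae_eq_integral => //.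
- exact: measurable_fun_completion_ae.
- exact: measurable_fun_completion.
exists N; split; [exact: measurable_completion|exact: completion_null|].
by move=> x /= h12; apply: contrapT => Nx; apply: h12 => _; rewrite h21.
Qed.

End ae.
End completion.

Lemma p_integrable_ae d (T : measurableType d) (R : realType)
    (mu : probability T R) (F G : T -> \bar R) (Z : set T) :
  measurable_fun [set: T] G -> measurable Z -> mu Z = 0%E ->
  (forall x, ~ Z x -> F x = G x) ->
  (\int[mu]_x G^\+ x < +oo \/ \int[mu]_x G^\- x < +oo)%E ->
  p_integrable mu F.
Proof.
move=> mG mZ Z0 FG Gfin; split; first exact: measurable_fun_completion_ae FG.
have [mGp mGn] := (measurable_funepos mG, measurable_funeneg mG).
rewrite (integral_completion_ae mGp mZ Z0); last by move=> x Zx; rewrite !funeposE FG.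
rewrite (integral_completion_ae mGn mZ Z0) //.
by move=> x Zx; rewrite !funenegE FG.
Qed.

Lemma measurable_fun_patch d (T : measurableType d) (R : realType)
    (f : T -> R) (N : set T) (B : rat -> set T) (b : R) :
  measurable N -> (forall q, measurable (B q)) ->
  (forall q x, ~ N x -> B q x <-> f x < ratr q) ->
  measurable_fun [set: T] (fun x => if x \in N then b else f x).
Proof.
move=> mN mB NB.
apply: (measurability _ (RGenInftyO.measurableE R)) => //.
move=> _ [_ [r ->] <-]; rewrite setTI.
have -> : (fun x => if x \in N then b else f x) @^-1` `]-oo, r[ =
    ((\bigcup_(q : rat) (if ratr q < r then B q else set0)) `\` N) `|`
    (if b < r then N else set0).
  apply/seteqP; split => x /=; rewrite in_itv /=.
    case: ifPn => [/set_mem Nx br|/negP Nx fxr]; first by right; rewrite br.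
    have {}Nx : ~ N x by move=> ?; apply: Nx; exact/mem_set.
    left; split => //.
    have [q] := rat_in_itvoo fxr; rewrite in_itv /= => /andP[fq qr].
    by exists q => //; rewrite qr; exact/(NB q x Nx).2.
  move=> [[[q _]]|].
    case: ifPn => // qr Bq Nx; rewrite ifF; last by apply/negbTE; rewrite notin_setE.
    by apply: lt_trans qr; exact/(NB q x Nx).1.
  by case: ifPn => // br Nx; rewrite ifT//; exact/mem_set.
apply: measurableU; last by case: ifP.
apply: measurableD => //; apply: bigcupT_measurable_rat => q.
by case: ifP.
Qed.

(* The exceptional set gathers, over the countably many rational levels q,
   the gaps between Borel inner and outer approximations of [f < q]. *)
Lemma universally_measurable_fun_patch (R : realType) (X : ptopologicalType)
    (f : borel X -> R) (b : R) (nu : probability (borel X) R) :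
  universally_measurable_fun f ->
  exists N : set (borel X), [/\ measurable N, nu N = 0%E &
    measurable_fun [set: borel X] (fun x => if x \in N then b else f x)].
Proof.
move=> umf.
have /choice[BC hBC] q : exists BC : set (borel X) * set (borel X),
    [/\ measurable BC.1, measurable BC.2, BC.1 `<=` f @^-1` `]-oo, ratr q[,
        f @^-1` `]-oo, ratr q[ `<=` BC.2 & nu (BC.2 `\` BC.1) = 0%E].
  have [B [C [mB mC BA AC nuCB]]] := umf _ (measurable_itv `]-oo, ratr q[) nu.
  by exists (B, C).
pose gap q := (BC q).2 `\` (BC q).1.
have mgap q : measurable (gap q) by have [? ? _ _ _] := hBC q; exact: measurableD.
pose N := \bigcup_n gap (odflt 0 (unpickle n)).
have mN : measurable N by exact: bigcupT_measurable.
exists N; split => //.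
- apply/eqP; rewrite -measure_le0.
  have [M [mM M0 NM]] : nu.-negligible N.
    apply: negligible_bigcup => n; exists (gap (odflt 0 (unpickle n))).
    by split => //; have [_ _ _ _ ?] := hBC (odflt 0 (unpickle n)).
  by rewrite -M0 le_measure// inE.
apply: (measurable_fun_patch (B := fun q => (BC q).1) _ mN) => [q|q x Nx].
  by have [] := hBC q.
have [_ _ BA AC _] := hBC q; split => [/BA/=|fx]; first by rewrite in_itv.
apply: contrapT => Bx; apply: Nx; exists (pickle q) => //.
by rewrite pickleK /=; split => //; apply: AC => /=; rewrite in_itv.
Qed.

Section bounded_integral.
Local Open Scope ereal_scope.
Context d (S : measurableType d) (R : realType) (p : probability S R).

Lemma integral_le_cst (v : S -> \bar R) (c : R) :
  (forall x, 0 <= v x) -> measurable_fun [set: S] v ->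
  (forall x, v x <= c%:E) -> \int[p]_x v x <= c%:E.
Proof.
move=> v0 mv vc; apply: (@le_trans _ _ (\int[p]_x (cst c%:E) x)).
  exact: ge0_le_integral.
by rewrite integral_cst // (_ : _ [set: S] = 1) ?mule1 //; exact: probability_setT.
Qed.

Let integral_fin_num (v : S -> \bar R) (c : R) :
  (forall x, 0 <= v x) -> measurable_fun [set: S] v ->
  (forall x, v x <= c%:E) -> \int[p]_x v x \is a fin_num.
Proof.
move=> v0 mv vc; apply: (fin_num_le_cst _ (integral_le_cst v0 mv vc)).
exact: integral_ge0.
Qed.

Let integral_funeneg_subB_fin (u v : S -> \bar R) (c : R) :
  (forall x, 0 <= u x) -> measurable_fun [set: S] u ->
  (forall x, 0 <= v x) -> measurable_fun [set: S] v ->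
  (forall x, v x <= c%:E) ->
  \int[p]_x (fun x => u x - v x)^\- x \is a fin_num.
Proof.
move=> u0 mu v0 mv vc; apply: (integral_fin_num (c := c)) => [x||x].
- exact: funeneg_ge0.
- exact/measurable_funeneg/emeasurable_funB.
exact: le_trans (funeneg_subB_le _ _ (fin_num_le_cst _ (vc x))) (vc x).
Qed.

Let integralB_ge0_boundedr (u v : S -> \bar R) (c : R) :
  (forall x, 0 <= u x) -> measurable_fun [set: S] u ->
  (forall x, 0 <= v x) -> measurable_fun [set: S] v ->
  (forall x, v x <= c%:E) ->
  \int[p]_x (u x - v x) = \int[p]_x u x - \int[p]_x v x.
Proof.
move=> u0 mu v0 mv vc.
have vfin := integral_fin_num v0 mv vc.
have vNy : - (\int[p]_x v x) != -oo by have := vfin; rewrite -fin_numN => /fin_numP[].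
have vxfin x : v x \is a fin_num := fin_num_le_cst (v0 x) (vc x).
have iv : p.-integrable [set: S] v.
  apply/integrableP; split => //.
  under eq_integral do rewrite gee0_abs //.
  by rewrite -ge0_fin_numE // integral_ge0.
have [ufin|] := ltP (\int[p]_x u x) +oo.
  have iu : p.-integrable [set: S] u.
    apply/integrableP; split => //.
    by under eq_integral do rewrite gee0_abs //.
  exact: integralB.
rewrite leye_eq => /eqP uoo; rewrite uoo [LHS]integralE.
have muv : measurable_fun [set: S] (fun x => u x - v x) by exact: emeasurable_funB.
have muvp := measurable_funepos muv.
have -> : \int[p]_x (fun x => u x - v x)^\+ x = +oo.
  have : \int[p]_x u x <= \int[p]_x ((fun x => u x - v x)^\+ x + v x).
    apply: ge0_le_integral => //.
      exact: emeasurable_funD.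
    move=> x _; rewrite funeposE -{1}(subeK (u x) (vxfin x)) leeD2rE ?vxfin //.
    by rewrite le_max lexx.
  rewrite ge0_integralD // uoo leye_eq => /eqP h.
  by have := addeK (\int[p]_x (fun x => u x - v x)^\+ x) vfin; rewrite h addye.
have := integral_funeneg_subB_fin u0 mu v0 mv vc.
by rewrite -fin_numN => /fin_numP[nNy _]; rewrite !addye.
Qed.

Lemma integralB_ge0_bounded (u v : S -> \bar R) (c : R) :
  (forall x, 0 <= u x) -> measurable_fun [set: S] u ->
  (forall x, 0 <= v x) -> measurable_fun [set: S] v ->
  (forall x, u x <= c%:E) \/ (forall x, v x <= c%:E) ->
  \int[p]_x (u x - v x) = \int[p]_x u x - \int[p]_x v x.
Proof.
move=> u0 mu v0 mv [uc|]; last exact: integralB_ge0_boundedr.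
have uxfin x : u x \is a fin_num := fin_num_le_cst (u0 x) (uc x).
transitivity (\int[p]_x - (v x - u x)).
  by apply: eq_integral => x _; rewrite fin_num_oppeB // addeC.
rewrite integralN; last first.
  by apply: fin_num_adde_defl; rewrite fin_numN (integral_funeneg_subB_fin v0 mv u0 mu uc).
have ufin := integral_fin_num u0 mu uc.
by rewrite (integralB_ge0_boundedr v0 mv u0 mu uc) fin_num_oppeB // addeC.
Qed.

End bounded_integral.

Section barycenter.
Local Open Scope ereal_scope.
Context d d' (T : measurableType d) (S : measurableType d') (R : realType).
Variables (k : S -> probability T R) (p : probability S R).
Hypothesis mk : forall U, measurable U -> measurable_fun [set: S] (k ^~ U).
Variable nu : {measure set T -> \bar R}.
Hypothesis nuE : forall A, measurable A -> nu A = \int[p]_e k e A.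

Let measurable_fun_pprobability : measurable_fun [set: S] (k : S -> pprobability T R).
Proof.
apply: (measurability (@pset _ _ _ : set (set (pprobability T R)))) => //.
move=> _ [_ [r _] [U mU <-]] <-.
exact: emeasurable_fun_infty_o (mk mU) _.
Qed.

(* nu coincides with the composition of the constant kernel tt |-> p with the
   kernel (tt, e) |-> k e, whose integrals integral_kcomp computes. *)
Lemma ge0_integral_barycenter (f : T -> \bar R) :
  (forall x, 0 <= f x) -> measurable_fun [set: T] f ->
  \int[nu]_x f x = \int[p]_e \int[k e]_x f x.
Proof.
pose l := kprobability (measurable_cst (p : pprobability S R) : measurable_fun [set: unit] _).
pose k' := kprobability (measurableT_comp measurable_fun_pprobability
  (@measurable_snd _ _ unit S)).
move=> f0 mf; rewrite -(integral_kcomp l k' tt f0 mf).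
by apply: eq_measure_integral => A mA _; rewrite nuE.
Qed.

Lemma barycenter_null (N : set T) : measurable N -> nu N = 0 ->
  exists Z : set S, [/\ measurable Z, p Z = 0 & forall e, ~ Z e -> k e N = 0].
Proof.
move=> mN nuN0.
have : ae_eq p [set: S] (k ^~ N) (cst 0%R).
  apply/(ae_eq_integral_abs p measurableT (mk mN)).
  by under eq_integral do rewrite gee0_abs //; rewrite -nuE.
case=> Z [mZ pZ0 sZ]; exists Z; split => // e Ze.
by apply: contrapT => ne; apply: Ze; apply: sZ => /= h; apply: ne; exact: h.
Qed.

Lemma integral_barycenter_semibounded (g : T -> R) (b : R) :
  measurable_fun [set: T] g -> (forall x, g x <= b)%R \/ (forall x, b <= g x)%R ->
  let G e := \int[k e]_x (g x)%:E in
  [/\ measurable_fun [set: S] G,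
      \int[p]_e G^\+ e < +oo \/ \int[p]_e G^\- e < +oo &
      \int[nu]_x (g x)%:E = \int[p]_e G e].
Proof.
move=> mg gb G.
have mge : measurable_fun [set: T] (EFin \o g) by exact/measurable_EFinP.
pose G1 e := \int[k e]_x (EFin \o g)^\+ x.
pose G2 e := \int[k e]_x (EFin \o g)^\- x.
have GE : G = fun e => G1 e - G2 e by apply/funext => e; exact: integralE.
have G10 e : 0 <= G1 e by exact: integral_ge0.
have G20 e : 0 <= G2 e by exact: integral_ge0.
have mG1 : measurable_fun [set: S] G1.
  exact: measurable_fun_integral_kernel (measurable_funepos mge).
have mG2 : measurable_fun [set: S] G2.
  exact: measurable_fun_integral_kernel (measurable_funeneg mge).
have G12b : (forall e, G1 e <= `|b|%:E) \/ (forall e, G2 e <= `|b|%:E).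
  case: (bounded_funepos_or_funeneg gb) => gb'; [left|right] => e;
    apply: integral_le_cst => //; [exact: measurable_funepos|exact: measurable_funeneg].
split.
- by rewrite GE; exact: emeasurable_funB.
- rewrite GE; case: G12b => Gb; [left|right];
    apply: (le_lt_trans (integral_le_cst p (c := `|b|) _ _ _)) (ltry _).
  + exact: funepos_ge0.
  + exact/measurable_funepos/emeasurable_funB.
  + by move=> e; exact: le_trans (funepos_subB_le _ _) (Gb e).
  + exact: funeneg_ge0.
  + exact/measurable_funeneg/emeasurable_funB.
  + by move=> e; exact: le_trans (funeneg_subB_le _ _ (fin_num_le_cst _ (Gb e))) (Gb e).
rewrite GE integralE.
rewrite !ge0_integral_barycenter //.
- by rewrite (integralB_ge0_bounded p G10 mG1 G20 mG2 G12b).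
- exact: measurable_funeneg.
- exact: measurable_funepos.
Qed.

End barycenter.

Lemma measurable_eval_ext (R : realType) d (T : measurableType d)
    (H : set (probability T R)) (e0 : {nu | ext H nu}) (U : set T) :
  measurable U ->
  measurable_fun [set: extH_space e0] (fun e : extH_space e0 => sval e U).
Proof. by move=> mU _ B mB; apply: sub_gen_smallest; exists U => //; exists B. Qed.

Theorem lemma9p9 (R : realType) (X : ptopologicalType) (n : nat)
  (fs : 'I_n -> borel X -> R) (c : 'I_n -> R) (f : borel X -> R) :
  suslin R X ->
  (forall i, measurable_fun setT (fs i)) ->
  semibounded f ->
  universally_measurable_fun f ->
  measure_affine (Hset fs c)
    (fun nu => \int[completion nu]_x (f x)%:E)%E.
Proof.
move=> _ _ sbf umf nu _ e0 p nuE.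
have [b fb] : exists b, (forall x, f x <= b) \/ (forall x, b <= f x).
  by case: sbf => -[b fb]; exists b; [left|right].
have [N [mN nuN0 mg]] := universally_measurable_fun_patch b nu umf.
set g := fun x => if x \in N then b else f x in mg.
have fg x : ~ N x -> (f x)%:E = (g x)%:E.
  by move=> Nx; rewrite /g ifF //; apply/negbTE; rewrite notin_setE.
have gb : (forall x, g x <= b) \/ (forall x, b <= g x).
  by case: fb => fb; [left|right] => x; rewrite /g; case: ifP.
have mk := measurable_eval_ext (e0 := e0).
have [Z [mZ pZ0 ZN]] := barycenter_null mk nuE mN nuN0.
have [mG Gfin nuG] := integral_barycenter_semibounded mk nuE mg gb.
have mge : measurable_fun [set: borel X] (fun x => (g x)%:E) by exact/measurable_EFinP.
have FG e : ~ Z e -> (\int[completion (sval e)]_x (f x)%:E = \int[sval e]_x (g x)%:E)%E.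
  by move=> Ze; rewrite (integral_completion_ae mge mN (ZN e Ze) fg).
split; first exact: p_integrable_ae mG mZ pZ0 FG Gfin.
by rewrite (integral_completion_ae mge mN nuN0 fg) nuG (integral_completion_ae mG mZ pZ0 FG).
Qed.
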